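(* Let $\mathbf{u}=(u_1,u_2),\mathbf{v}=(v_1,v_2)\in\mathbb{R}^2$ be fixed linearly independent unit vectors, and let $D_1\subset\mathbb{R}^2$ be an open disc centered at the origin. Let $\mathbf{f}=(f_1,f_2)$ be a vector field on $\mathbb{R}^2$ with $f_1,f_2\in C^2_c(D_1)$. Then $$\operatorname{div}\mathbf{f}=-\frac{1}{\det(\mathbf{v},\mathbf{u})}\,D_{\mathbf{u}}D_{\mathbf{v}}\,\mathcal{T}\mathbf{f},$$ where $\det(\mathbf{v},\mathbf{u})=v_1u_2-u_1v_2$. In particular, the operator $\mathcal{T}$ is injective (invertible) on compactly supported (in $D_1$, with $C^2$ components) curl-free vector fields.
   Context: For a function $h$ on $\mathbb{R}^2$ and a unit vector $\mathbf{u}$, $\mathcal{X}_{\mathbf{u}}h(\mathbf{x})=\int_0^\infty h(\mathbf{x}+t\mathbf{u})\,dt$ and $D_{\mathbf{u}}h=\mathbf{u}\cdot\nabla h$. For $\mathbf{x}=(x_1,x_2)$ set $\mathbf{x}^\perp=(-x_2,x_1)$. The transverse V-line transform is $\mathcal{T}\mathbf{f}=-\mathcal{X}_{\mathbf{u}}(\mathbf{f}\cdot\mathbf{u}^\perp)+\mathcal{X}_{\mathbf{v}}(\mathbf{f}\cdot\mathbf{v}^\perp)$, a function on $\mathbb{R}^2$. Here $\operatorname{div}\mathbf{f}=\frac{\partial f_1}{\partial x_1}+\frac{\partial f_2}{\partial x_2}$ and curl-free means $\frac{\partial f_2}{\partial x_1}-\frac{\partial f_1}{\partial x_2}=0$.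 *)

From Stdlib Require Import Reals.
From Coquelicot Require Import Coquelicot.
Open Scope R_scope.

Definition pt := (R * R)%type.

Definition d1 (h : pt -> R) (x : pt) : R := Derive (fun t => h (t, snd x)) (fst x).
Definition d2 (h : pt -> R) (x : pt) : R := Derive (fun t => h (fst x, t)) (snd x).

Definition C1 (h : pt -> R) : Prop :=
  (forall x : pt, ex_derive (fun t => h (t, snd x)) (fst x)
               /\ ex_derive (fun t => h (fst x, t)) (snd x)) /\
  (forall x : pt, continuous h x /\ continuous (d1 h) x /\ continuous (d2 h) x).

Definition C2 (h : pt -> R) : Prop := C1 h /\ C1 (d1 h) /\ C1 (d2 h).

Definition in_disc (rho : R) (x : pt) : Prop := fst x ^ 2 + snd x ^ 2 < rho ^ 2.

(* h in C_c(D) for D the open disc of radius rho: the support of h (closure of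
   {h <> 0}) is a compact subset of D, i.e. contained in a closed disc of
   radius r < rho centered at the origin. *)
Definition compact_support_in_disc (rho : R) (h : pt -> R) : Prop :=
  exists r : R, 0 <= r /\ r < rho /\
    forall x : pt, r ^ 2 < fst x ^ 2 + snd x ^ 2 -> h x = 0.

Definition C2c_disc (rho : R) (h : pt -> R) : Prop :=
  C2 h /\ compact_support_in_disc rho h.

Definition shift (x : pt) (t : R) (u : pt) : pt :=
  (fst x + t * fst u, snd x + t * snd u).

Definition Xray (u : pt) (h : pt -> R) (x : pt) : R :=
  RInt_gen (fun t => h (shift x t u)) (at_point 0) (Rbar_locally p_infty).

Definition Ddir (u : pt) (h : pt -> R) (x : pt) : R :=
  fst u * d1 h x + snd u * d2 h x.

Definition perp (x : pt) : pt := (- snd x, fst x).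

Definition dot (a b : pt) : R := fst a * fst b + snd a * snd b.

Definition fdot (f1 f2 : pt -> R) (w : pt) : pt -> R :=
  fun x => dot (f1 x, f2 x) w.

Definition Tvl (u v : pt) (f1 f2 : pt -> R) (x : pt) : R :=
  - Xray u (fdot f1 f2 (perp u)) x + Xray v (fdot f1 f2 (perp v)) x.

Definition divf (f1 f2 : pt -> R) (x : pt) : R := d1 f1 x + d2 f2 x.

Definition curl_free (f1 f2 : pt -> R) : Prop :=
  forall x : pt, d1 f2 x - d2 f1 x = 0.

Definition det2 (v u : pt) : R := fst v * snd u - fst u * snd v.

(* Along a unit vector u the X-ray transform inverts the directional derivative,
   X_u (D_u h) = -h for compactly supported h (fundamental theorem of calculus on
   the ray), and it commutes with every directional derivative (differentiation
   under the integral sign, the integrand vanishing beyond a fixed time).  Hence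
   D_u D_v T f = D_v (f . u^perp) - D_u (f . v^perp), and expanding the directional
   derivatives shows this is -det(v,u) div f; no symmetry of second derivatives is
   needed.

   For injectivity, the difference h of two curl-free fields with the same
   transform is curl-free, divergence-free and compactly supported.  Then h is the
   gradient of g(a,b) = int_{-c}^a h_1(s,b) ds, and the flux
   b |-> int h_2(a,b) g(a,b) da has derivative int |h(a,b)|^2 da >= 0 (integrate
   by parts in a and use div h = 0) while vanishing at both ends of the support,
   so h = 0. *)

From Stdlib Require Import Reals Lra FunctionalExtensionality.
From Coquelicot Require Import Coquelicot.
Open Scope R_scope.

Definition lincomb (a : R) (p : pt -> R) (b : R) (q : pt -> R) : pt -> R :=
  fun y => a * p y + b * q y.

Definition has_partials (h : pt -> R) (x : pt) : Prop :=
  ex_derive (fun t => h (t, snd x)) (fst x) /\ ex_derive (fun t => h (fst x, t)) (snd x).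

Definition vanishes_outside (r : R) (h : pt -> R) : Prop :=
  forall x : pt, r ^ 2 < fst x ^ 2 + snd x ^ 2 -> h x = 0.

Lemma Ddir_lincomb_eq w h : Ddir w h = lincomb (fst w) (d1 h) (snd w) (d2 h).
Proof. reflexivity. Qed.

Lemma fdot_lincomb_eq f1 f2 w : fdot f1 f2 w = lincomb (fst w) f1 (snd w) f2.
Proof. extensionality y. unfold fdot, dot, lincomb; simpl. ring. Qed.

Lemma shift_comm x z w t u : shift (shift x z w) t u = shift (shift x t u) z w.
Proof. unfold shift; simpl. f_equal; ring. Qed.

Lemma shift_0 x w : shift x 0 w = x.
Proof. destruct x as [a b]. unfold shift; simpl. f_equal; ring. Qed.

Lemma continuous_comp_pair {U : UniformSpace} (H : pt -> R) (F G : U -> R) p :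
  continuous H (F p, G p) -> continuous F p -> continuous G p ->
  continuous (fun q => H (F q, G q)) p.
Proof.
  intros HH HF HG. apply (continuous_comp_2 F G (fun a b => H (a, b))); auto.
  eapply filterlim_ext; [| exact HH]. intros [a b]; reflexivity.
Qed.

Lemma continuity_2d_pt_of_continuous (H : pt -> R) a b :
  continuous H (a, b) -> continuity_2d_pt (fun x y => H (x, y)) a b.
Proof.
  intro HH. apply continuity_2d_pt_filterlim.
  eapply filterlim_ext; [| exact HH]. intros [x y]; reflexivity.
Qed.

Lemma continuity_2d_pt_swap f x y :
  continuity_2d_pt f x y -> continuity_2d_pt (fun u v => f v u) y x.
Proof. intros H eps. destruct (H eps) as [d Hd]. exists d. intros u v Hu Hv. auto. Qed.

Lemma continuous_lincomb a p b q y :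
  continuous p y -> continuous q y -> continuous (lincomb a p b q) y.
Proof.
  intros Hp Hq. unfold lincomb.
  apply (continuous_plus (fun x => a * p x) (fun x => b * q x));
    [apply (continuous_mult (fun _ => a) p) | apply (continuous_mult (fun _ => b) q)];
    auto using continuous_const.
Qed.

Lemma continuous_affine (c a b : R) (p : pt) :
  continuous (fun q : pt => c + fst q * a + snd q * b) p.
Proof.
  apply (continuous_plus (fun q : pt => c + fst q * a) (fun q : pt => snd q * b)).
  - apply (continuous_plus (fun _ => c) (fun q : pt => fst q * a)).
    + apply continuous_const.
    + apply (continuous_mult (fun q : pt => fst q) (fun _ => a));
        [apply continuous_fst | apply continuous_const].
  - apply (continuous_mult (fun q : pt => snd q) (fun _ => b));
      [apply continuous_snd | apply continuous_const].
Qed.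

Lemma continuous_on_line (h : pt -> R) x w t :
  (forall p, continuous h p) -> continuous (fun t => h (shift x t w)) t.
Proof.
  intro Hh. unfold shift.
  apply (continuous_comp_pair h (fun t => fst x + t * fst w) (fun t => snd x + t * snd w));
    auto.
  - apply (ex_derive_continuous (fun t => fst x + t * fst w)); auto_derive; auto.
  - apply (ex_derive_continuous (fun t => snd x + t * snd w)); auto_derive; auto.
Qed.

Lemma continuous_section1 (h : pt -> R) b a :
  (forall p, continuous h p) -> continuous (fun s => h (s, b)) a.
Proof.
  intro Hh. apply (continuous_comp_pair h (fun s => s) (fun _ => b));
    auto using continuous_id, continuous_const.
Qed.

Lemma ex_RInt_section1 (H : pt -> R) b c d :
  (forall p, continuous H p) -> ex_RInt (fun s => H (s, b)) c d.
Proof.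
  intro HH. apply (@ex_RInt_continuous R_CompleteNormedModule).
  intros; apply continuous_section1; auto.
Qed.

Lemma continuity_2d_pt_swapped (H : pt -> R) a b :
  continuous H (b, a) -> continuity_2d_pt (fun z s => H (s, z)) a b.
Proof.
  intro HH. apply (continuity_2d_pt_swap (fun x y => H (x, y))).
  apply continuity_2d_pt_of_continuous, HH.
Qed.

Lemma Rabs_sub_between x u c :
  Rmin x u <= c <= Rmax x u -> Rabs (c - x) <= Rabs (u - x).
Proof.
  unfold Rmin, Rmax; destruct (Rle_dec x u); intros [H1 H2];
    unfold Rabs; destruct (Rcase_abs (c - x)); destruct (Rcase_abs (u - x)); lra.
Qed.

(* Split [f u v - f x y] as [(f u v - f x v) + (f x v - f x y)] and apply the
   mean value theorem to each piece. *)
Lemma differentiable_pt_lim_of_partials (f : R -> R -> R) x y :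
  (forall u v, ex_derive (fun z => f z v) u) ->
  (forall u v, ex_derive (fun z => f u z) v) ->
  continuity_2d_pt (fun u v => Derive (fun z => f z v) u) x y ->
  continuity_2d_pt (fun u v => Derive (fun z => f u z) v) x y ->
  differentiable_pt_lim f x y (Derive (fun z => f z y) x) (Derive (fun z => f x z) y).
Proof.
  intros D1 D2 C1 C2 eps.
  assert (he : 0 < eps / 2) by (destruct eps; simpl; lra).
  destruct (C1 (mkposreal _ he)) as [d1 Hd1]. destruct (C2 (mkposreal _ he)) as [d2 Hd2].
  assert (hd : 0 < Rmin d1 d2) by (apply Rmin_pos; apply cond_pos).
  exists (mkposreal _ hd). intros u v Hu Hv. simpl in Hu, Hv.
  pose proof (Rmin_l d1 d2). pose proof (Rmin_r d1 d2).
  destruct (MVT_gen (fun z => f z v) x u (fun z => Derive (fun t => f t v) z)) as [c [Hc Ec]].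
  { intros; apply Derive_correct; auto. }
  { intros; apply (continuity_pt_filterlim (fun z => f z v)).
    apply (ex_derive_continuous (fun z => f z v)); auto. }
  destruct (MVT_gen (fun z => f x z) y v (fun z => Derive (fun t => f x t) z)) as [c' [Hc' Ec']].
  { intros; apply Derive_correct; auto. }
  { intros; apply (continuity_pt_filterlim (fun z => f x z)).
    apply (ex_derive_continuous (fun z => f x z)); auto. }
  simpl in Ec, Ec'.
  pose proof (Rabs_sub_between _ _ _ Hc). pose proof (Rabs_sub_between _ _ _ Hc').
  set (lx := Derive (fun z => f z y) x) in *.
  set (ly := Derive (fun z => f x z) y) in *.
  set (A := Derive (fun t => f t v) c) in *.
  set (B := Derive (fun t => f x t) c') in *.
  assert (EA : Rabs (A - lx) < eps / 2) by (apply (Hd1 c v); lra).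
  assert (EB : Rabs (B - ly) < eps / 2).
  { apply (Hd2 x c'); [rewrite Rminus_eq_0, Rabs_R0; apply cond_pos | lra]. }
  replace (f u v - f x y - (lx * (u - x) + ly * (v - y)))
    with ((A - lx) * (u - x) + (B - ly) * (v - y)) by lra.
  eapply Rle_trans; [apply Rabs_triang |]. rewrite !Rabs_mult.
  pose proof (Rmax_l (Rabs (u - x)) (Rabs (v - y))).
  pose proof (Rmax_r (Rabs (u - x)) (Rabs (v - y))).
  pose proof (Rabs_pos (u - x)). pose proof (Rabs_pos (v - y)).
  pose proof (Rabs_pos (A - lx)). pose proof (Rabs_pos (B - ly)).
  simpl. nra.
Qed.

Section C1_facts.

Variable h : pt -> R.
Hypothesis HC : C1 h.

Lemma C1_has_partials x : has_partials h x.
Proof. exact (proj1 HC x). Qed.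

Lemma C1_continuous p : continuous h p.
Proof. exact (proj1 (proj2 HC p)). Qed.

Lemma C1_continuous_d1 p : continuous (d1 h) p.
Proof. exact (proj1 (proj2 (proj2 HC p))). Qed.

Lemma C1_continuous_d2 p : continuous (d2 h) p.
Proof. exact (proj2 (proj2 (proj2 HC p))). Qed.

Lemma C1_continuous_Ddir w p : continuous (Ddir w h) p.
Proof.
  rewrite Ddir_lincomb_eq.
  apply continuous_lincomb; [apply C1_continuous_d1 | apply C1_continuous_d2].
Qed.

Lemma C1_is_derive1 a b : is_derive (fun s => h (s, b)) a (d1 h (a, b)).
Proof. exact (Derive_correct _ _ (proj1 (proj1 HC (a, b)))). Qed.

Lemma C1_is_derive2 a b : is_derive (fun s => h (a, s)) b (d2 h (a, b)).
Proof. exact (Derive_correct _ _ (proj2 (proj1 HC (a, b)))). Qed.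

Lemma C1_differentiable_pt_lim p :
  differentiable_pt_lim (fun a b => h (a, b)) (fst p) (snd p) (d1 h p) (d2 h p).
Proof.
  destruct p as [a b].
  apply (differentiable_pt_lim_of_partials (fun a b => h (a, b))).
  - intros u v; exact (proj1 (C1_has_partials (u, v))).
  - intros u v; exact (proj2 (C1_has_partials (u, v))).
  - apply (continuity_2d_pt_of_continuous (d1 h)), C1_continuous_d1.
  - apply (continuity_2d_pt_of_continuous (d2 h)), C1_continuous_d2.
Qed.

Lemma C1_is_derive_along x w t :
  is_derive (fun t => h (shift x t w)) t (Ddir w h (shift x t w)).
Proof.
  apply is_derive_Reals. unfold shift.
  assert (L1 : derivable_pt_lim (fun t => fst x + t * fst w) t (fst w))
    by (apply is_derive_Reals; auto_derive; auto; ring).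
  assert (L2 : derivable_pt_lim (fun t => snd x + t * snd w) t (snd w))
    by (apply is_derive_Reals; auto_derive; auto; ring).
  pose proof (derivable_pt_lim_comp_2d _ _ _ t _ _ _ _
                (C1_differentiable_pt_lim (shift x t w)) L1 L2) as K.
  unfold Ddir. rewrite (Rmult_comm (fst w)), (Rmult_comm (snd w)). exact K.
Qed.

End C1_facts.

Lemma has_partials_lincomb a p b q x :
  has_partials p x -> has_partials q x -> has_partials (lincomb a p b q) x.
Proof.
  intros [Hp1 Hp2] [Hq1 Hq2]. unfold lincomb. split.
  - apply (ex_derive_plus (fun t => a * p (t, snd x)) (fun t => b * q (t, snd x)));
      apply ex_derive_scal; auto.
  - apply (ex_derive_plus (fun t => a * p (fst x, t)) (fun t => b * q (fst x, t)));
      apply ex_derive_scal; auto.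
Qed.

Lemma d1_lincomb a p b q x : has_partials p x -> has_partials q x ->
  d1 (lincomb a p b q) x = lincomb a (d1 p) b (d1 q) x.
Proof.
  intros [Hp _] [Hq _]. unfold d1, lincomb.
  rewrite (Derive_plus (fun t => a * p (t, snd x)) (fun t => b * q (t, snd x)));
    try (apply ex_derive_scal; auto).
  rewrite !Derive_scal. reflexivity.
Qed.

Lemma d2_lincomb a p b q x : has_partials p x -> has_partials q x ->
  d2 (lincomb a p b q) x = lincomb a (d2 p) b (d2 q) x.
Proof.
  intros [_ Hp] [_ Hq]. unfold d2, lincomb.
  rewrite (Derive_plus (fun t => a * p (fst x, t)) (fun t => b * q (fst x, t)));
    try (apply ex_derive_scal; auto).
  rewrite !Derive_scal. reflexivity.
Qed.

Lemma Ddir_lincomb w a p b q x : has_partials p x -> has_partials q x ->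
  Ddir w (lincomb a p b q) x = lincomb a (Ddir w p) b (Ddir w q) x.
Proof.
  intros Hp Hq. unfold Ddir at 1. rewrite d1_lincomb, d2_lincomb by assumption.
  unfold lincomb, Ddir. ring.
Qed.

Lemma d1_lincomb_C1 a p b q : C1 p -> C1 q ->
  d1 (lincomb a p b q) = lincomb a (d1 p) b (d1 q).
Proof. intros Hp Hq. extensionality y. apply d1_lincomb; apply C1_has_partials; auto. Qed.

Lemma d2_lincomb_C1 a p b q : C1 p -> C1 q ->
  d2 (lincomb a p b q) = lincomb a (d2 p) b (d2 q).
Proof. intros Hp Hq. extensionality y. apply d2_lincomb; apply C1_has_partials; auto. Qed.

Lemma C1_lincomb a p b q : C1 p -> C1 q -> C1 (lincomb a p b q).
Proof.
  intros Hp Hq. split.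
  - intro x. apply has_partials_lincomb; apply C1_has_partials; auto.
  - intro x. rewrite d1_lincomb_C1, d2_lincomb_C1 by assumption.
    split; [| split]; apply continuous_lincomb;
      auto using C1_continuous, C1_continuous_d1, C1_continuous_d2.
Qed.

Lemma C2_lincomb a p b q : C2 p -> C2 q -> C2 (lincomb a p b q).
Proof.
  intros [Hp [Hp1 Hp2]] [Hq [Hq1 Hq2]].
  split; [| rewrite d1_lincomb_C1, d2_lincomb_C1 by assumption; split];
    apply C1_lincomb; auto.
Qed.

Lemma C1_Ddir w h : C2 h -> C1 (Ddir w h).
Proof. intros [_ [H1 H2]]. rewrite Ddir_lincomb_eq. apply C1_lincomb; auto. Qed.

Lemma locally_gt (phi : R -> R) x c :
  continuous phi x -> c < phi x -> locally x (fun t => c < phi t).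
Proof.
  intros Hc H. apply (Hc (fun y => c < y)).
  assert (hp : 0 < phi x - c) by lra.
  exists (mkposreal _ hp). intros y Hy.
  change (Rabs (y - phi x) < phi x - c) in Hy. apply Rabs_lt_between in Hy. lra.
Qed.

Lemma vanishes_outside_d1 r h : vanishes_outside r h -> vanishes_outside r (d1 h).
Proof.
  intros S [a b] H. unfold d1; simpl in *.
  rewrite (Derive_ext_loc _ (fun _ => 0)); [apply Derive_const |].
  assert (L : locally a (fun t => r ^ 2 < t ^ 2 + b ^ 2)).
  { apply (locally_gt (fun t => t ^ 2 + b ^ 2)); auto.
    apply (ex_derive_continuous (fun t => t ^ 2 + b ^ 2)). auto_derive; auto. }
  eapply filter_imp; [| exact L]. intros t Ht. apply S. exact Ht.
Qed.

Lemma vanishes_outside_d2 r h : vanishes_outside r h -> vanishes_outside r (d2 h).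
Proof.
  intros S [a b] H. unfold d2; simpl in *.
  rewrite (Derive_ext_loc _ (fun _ => 0)); [apply Derive_const |].
  assert (L : locally b (fun t => r ^ 2 < a ^ 2 + t ^ 2)).
  { apply (locally_gt (fun t => a ^ 2 + t ^ 2)); auto.
    apply (ex_derive_continuous (fun t => a ^ 2 + t ^ 2)). auto_derive; auto. }
  eapply filter_imp; [| exact L]. intros t Ht. apply S. exact Ht.
Qed.

Lemma vanishes_outside_lincomb r a p b q :
  vanishes_outside r p -> vanishes_outside r q -> vanishes_outside r (lincomb a p b q).
Proof. intros Sp Sq y Hy. unfold lincomb. rewrite (Sp y Hy), (Sq y Hy). ring. Qed.

Lemma vanishes_outside_Ddir r w h : vanishes_outside r h -> vanishes_outside r (Ddir w h).
Proof.
  intro S. rewrite Ddir_lincomb_eq.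
  apply vanishes_outside_lincomb; [apply vanishes_outside_d1 | apply vanishes_outside_d2]; auto.
Qed.

Lemma C2c_disc_vanishes_outside rho h : C2c_disc rho h -> vanishes_outside rho h.
Proof. intros [_ [r [r0 [rrho S]]]] y Hy. apply S. nra. Qed.

Lemma vanishes_outside_box r h a b : vanishes_outside r h ->
  Rabs r + 1 <= Rabs a \/ Rabs r + 1 <= Rabs b -> h (a, b) = 0.
Proof.
  intros S H. apply S. cbn [fst snd].
  rewrite <- (pow2_abs r), <- (pow2_abs a), <- (pow2_abs b).
  pose proof (Rabs_pos r). pose proof (Rabs_pos a). pose proof (Rabs_pos b).
  destruct H; nra.
Qed.

Definition ray_exit_time (r : R) (x : pt) : R :=
  2 * (Rabs (fst x) + Rabs (snd x)) + Rabs r + 1.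

Lemma ray_exit_time_shift r x z w : Rabs z <= 1 ->
  ray_exit_time r (shift x z w) <= ray_exit_time r x + 2 * (Rabs (fst w) + Rabs (snd w)).
Proof.
  intro Hz. unfold ray_exit_time, shift; simpl.
  assert (B : forall c d, Rabs (c + z * d) <= Rabs c + Rabs d).
  { intros c d. eapply Rle_trans; [apply Rabs_triang |]. rewrite Rabs_mult.
    pose proof (Rabs_pos d). nra. }
  pose proof (B (fst x) (fst w)). pose proof (B (snd x) (snd w)). lra.
Qed.

(** * The X-ray transform *)

Section Xray_transform.

Variable u : pt.
Hypothesis hu : fst u ^ 2 + snd u ^ 2 = 1.

(* [|x + t u|^2 >= t (t - 2 (|x1| + |x2|))] since [u] is a unit vector. *)
Lemma vanishes_on_ray_tail r h x t :
  vanishes_outside r h -> ray_exit_time r x <= t -> h (shift x t u) = 0.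
Proof.
  intros S Ht. apply S. unfold shift, ray_exit_time in *.
  destruct x as [x1 x2]; destruct u as [u1 u2]; cbn [fst snd] in *.
  assert (B : forall y e, e ^ 2 <= 1 -> - Rabs y <= y * e).
  { intros y e He. assert (Rabs e <= 1) by (apply Rabs_le; split; nra).
    assert (Rabs (y * e) <= Rabs y) by (rewrite Rabs_mult; pose proof (Rabs_pos y); nra).
    pose proof (Rle_abs (- (y * e))). rewrite Rabs_Ropp in *. lra. }
  assert (b1 : - Rabs x1 <= x1 * u1) by (apply B; nra).
  assert (b2 : - Rabs x2 <= x2 * u2) by (apply B; nra).
  pose proof (Rabs_pos x1). pose proof (Rabs_pos x2). pose proof (Rabs_pos r).
  rewrite <- (pow2_abs r).
  assert (t * (t - 2 * (Rabs x1 + Rabs x2)) >= (Rabs r + 1) * (Rabs r + 1)) by nra.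
  nra.
Qed.

Lemma Xray_eq_RInt h r y L :
  (forall p, continuous h p) -> vanishes_outside r h -> ray_exit_time r y <= L ->
  Xray u h y = RInt (fun t => h (shift y t u)) 0 L.
Proof.
  intros Hc S HL. unfold Xray. apply is_RInt_gen_unique.
  assert (E : forall c d, ex_RInt (fun t => h (shift y t u)) c d).
  { intros. apply (@ex_RInt_continuous R_CompleteNormedModule).
    intros; apply continuous_on_line; auto. }
  intros P HP.
  apply Filter_prod with (fun a => a = 0) (fun b => L < b).
  - reflexivity.
  - exists L; intros; lra.
  - intros a b -> Hb. exists (RInt (fun t => h (shift y t u)) 0 L).
    split; [| apply locally_singleton; exact HP].
    replace (RInt (fun t => h (shift y t u)) 0 L) with (RInt (fun t => h (shift y t u)) 0 b).
    { apply RInt_correct; auto. }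
    rewrite <- (RInt_Chasles _ 0 L b) by auto.
    rewrite (RInt_ext _ (fun _ => 0) L b), RInt_const.
    + unfold scal, plus; simpl; unfold mult; simpl. ring.
    + intros t Ht. apply (vanishes_on_ray_tail r); auto.
      rewrite Rmin_left in Ht; lra.
Qed.

Lemma Xray_lincomb r a p b q x :
  (forall y, continuous p y) -> (forall y, continuous q y) ->
  vanishes_outside r p -> vanishes_outside r q ->
  Xray u (lincomb a p b q) x = a * Xray u p x + b * Xray u q x.
Proof.
  intros Cp Cq Sp Sq.
  assert (Ex : forall g : pt -> R, (forall y, continuous g y) ->
            ex_RInt (fun t => g (shift x t u)) 0 (ray_exit_time r x)).
  { intros g Cg. apply (@ex_RInt_continuous R_CompleteNormedModule).
    intros; apply continuous_on_line; auto. }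
  rewrite !(Xray_eq_RInt _ r x (ray_exit_time r x));
    auto using vanishes_outside_lincomb, continuous_lincomb, Rle_refl.
  unfold lincomb.
  rewrite (RInt_plus (fun t => a * p (shift x t u)) (fun t => b * q (shift x t u))).
  - rewrite (RInt_scal (fun t => p (shift x t u))), (RInt_scal (fun t => q (shift x t u)));
      auto.
  - apply (Ex (fun y => a * p y)). intro y.
    apply (continuous_mult (fun _ => a) p); auto using continuous_const.
  - apply (Ex (fun y => b * q y)). intro y.
    apply (continuous_mult (fun _ => b) q); auto using continuous_const.
Qed.

(* Fundamental theorem of calculus along the ray: [h] vanishes at its far end. *)
Lemma Xray_Ddir_self r h x :
  C1 h -> vanishes_outside r h -> Xray u (Ddir u h) x = - h x.
Proof.
  intros HC S.
  rewrite (Xray_eq_RInt _ r x (ray_exit_time r x));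
    auto using C1_continuous_Ddir, vanishes_outside_Ddir, Rle_refl.
  rewrite (is_RInt_unique _ _ _ _
             (is_RInt_derive (fun t => h (shift x t u)) (fun t => Ddir u h (shift x t u))
                0 (ray_exit_time r x)
                (fun t _ => C1_is_derive_along h HC x u t)
                (fun t _ => continuous_on_line _ _ _ t (C1_continuous_Ddir h HC u)))).
  rewrite (vanishes_on_ray_tail r h x) by auto using Rle_refl.
  rewrite shift_0. unfold minus, plus, opp; simpl. ring.
Qed.

End Xray_transform.

(* For [|z| < 1] the rays from [shift x z w] leave the support before time [L], so
   the improper integrals become integrals over the fixed interval [[0, L]]. *)
Lemma Xray_is_derive_along u w h r x :
  fst u ^ 2 + snd u ^ 2 = 1 -> C1 h -> vanishes_outside r h ->
  is_derive (fun z => Xray u h (shift x z w)) 0 (Xray u (Ddir w h) x).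
Proof.
  intros hu HC S.
  set (L := ray_exit_time r x + 2 * (Rabs (fst w) + Rabs (snd w))).
  assert (HL : ray_exit_time r x <= L)
    by (unfold L; pose proof (Rabs_pos (fst w)); pose proof (Rabs_pos (snd w)); lra).
  set (F := fun z t => h (shift (shift x z w) t u)).
  assert (DF : forall z t, is_derive (fun z => F z t) z (Ddir w h (shift (shift x z w) t u))).
  { intros z t. unfold F. rewrite shift_comm.
    eapply is_derive_ext; [| apply (C1_is_derive_along h HC (shift x t u) w z)].
    intro s. simpl. rewrite shift_comm. reflexivity. }
  apply is_derive_ext_loc with (f := fun z => RInt (F z) 0 L).
  { exists (mkposreal 1 Rlt_0_1). intros z Hz. change (Rabs (z - 0) < 1) in Hz.
    rewrite Rminus_0_r in Hz. symmetry.
    apply (Xray_eq_RInt u hu h r); auto using C1_continuous.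
    apply ray_exit_time_shift; lra. }
  rewrite (Xray_eq_RInt u hu _ r x L); auto using C1_continuous_Ddir, vanishes_outside_Ddir.
  replace (RInt (fun t => Ddir w h (shift x t u)) 0 L)
    with (RInt (fun t => Derive (fun z => F z t) 0) 0 L).
  2: { apply RInt_ext. intros t _. pose proof (DF 0 t) as D0. rewrite shift_0 in D0.
       exact (is_derive_unique _ _ _ D0). }
  apply (is_derive_RInt_param F 0 L 0).
  - apply filter_forall. intros z t _. eexists; apply DF.
  - intros t _.
    apply continuity_2d_pt_ext with (f := fun z t => Ddir w h (shift (shift x z w) t u)).
    { intros z s. symmetry. apply is_derive_unique, DF. }
    apply (continuity_2d_pt_of_continuous
             (fun q => Ddir w h (fst x + fst q * fst w + snd q * fst u,
                                 snd x + fst q * snd w + snd q * snd u))).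
    apply (continuous_comp_pair (Ddir w h)); auto using C1_continuous_Ddir, continuous_affine.
  - apply filter_forall. intro z. apply (@ex_RInt_continuous R_CompleteNormedModule).
    intros t _. unfold F. apply continuous_on_line, C1_continuous, HC.
Qed.

Lemma is_derive_partial1 (F : pt -> R) x l :
  is_derive (fun z => F (shift x z (1, 0))) 0 l -> is_derive (fun t => F (t, snd x)) (fst x) l.
Proof.
  intro H.
  apply is_derive_ext with (f := fun t => F (shift x (t - fst x) (1, 0))).
  { intro t. f_equal. unfold shift; simpl. f_equal; ring. }
  rewrite <- (Rmult_1_l l).
  apply (is_derive_comp (fun z => F (shift x z (1, 0))) (fun t => t - fst x)).
  - rewrite Rminus_eq_0. exact H.
  - auto_derive; auto; ring.
Qed.

Lemma is_derive_partial2 (F : pt -> R) x l :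
  is_derive (fun z => F (shift x z (0, 1))) 0 l -> is_derive (fun t => F (fst x, t)) (snd x) l.
Proof.
  intro H.
  apply is_derive_ext with (f := fun t => F (shift x (t - snd x) (0, 1))).
  { intro t. f_equal. unfold shift; simpl. f_equal; ring. }
  rewrite <- (Rmult_1_l l).
  apply (is_derive_comp (fun z => F (shift x z (0, 1))) (fun t => t - snd x)).
  - rewrite Rminus_eq_0. exact H.
  - auto_derive; auto; ring.
Qed.

Section Xray_partials.

Variables (u : pt) (h : pt -> R) (r : R).
Hypotheses (hu : fst u ^ 2 + snd u ^ 2 = 1) (HC : C1 h) (S : vanishes_outside r h).

Lemma Xray_is_derive1 x : is_derive (fun t => Xray u h (t, snd x)) (fst x) (Xray u (d1 h) x).
Proof.
  apply is_derive_partial1.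
  replace (d1 h) with (Ddir (1, 0) h) by (extensionality y; unfold Ddir; simpl; ring).
  apply (Xray_is_derive_along u (1, 0) h r); auto.
Qed.

Lemma Xray_is_derive2 x : is_derive (fun t => Xray u h (fst x, t)) (snd x) (Xray u (d2 h) x).
Proof.
  apply is_derive_partial2.
  replace (d2 h) with (Ddir (0, 1) h) by (extensionality y; unfold Ddir; simpl; ring).
  apply (Xray_is_derive_along u (0, 1) h r); auto.
Qed.

Lemma has_partials_Xray x : has_partials (Xray u h) x.
Proof. split; eexists; [apply Xray_is_derive1 | apply Xray_is_derive2]. Qed.

Lemma Ddir_Xray w x : Ddir w (Xray u h) x = Xray u (Ddir w h) x.
Proof.
  assert (E1 : d1 (Xray u h) x = Xray u (d1 h) x)
    by exact (is_derive_unique _ _ _ (Xray_is_derive1 x)).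
  assert (E2 : d2 (Xray u h) x = Xray u (d2 h) x)
    by exact (is_derive_unique _ _ _ (Xray_is_derive2 x)).
  unfold Ddir at 1. rewrite E1, E2.
  rewrite Ddir_lincomb_eq, (Xray_lincomb u hu r);
    auto using C1_continuous_d1, C1_continuous_d2, vanishes_outside_d1, vanishes_outside_d2.
Qed.

End Xray_partials.

(** * The inversion formula *)

Lemma Ddir_perp_sub_divf u v f1 f2 x : has_partials f1 x -> has_partials f2 x ->
  Ddir v (fdot f1 f2 (perp u)) x - Ddir u (fdot f1 f2 (perp v)) x
  = - det2 v u * divf f1 f2 x.
Proof.
  intros H1 H2. rewrite !fdot_lincomb_eq, !Ddir_lincomb by assumption.
  unfold lincomb, Ddir, divf, det2, perp; simpl. ring.
Qed.

Lemma Ddir_Tvl u v r f1 f2 :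
  fst u ^ 2 + snd u ^ 2 = 1 -> fst v ^ 2 + snd v ^ 2 = 1 ->
  C2 f1 -> C2 f2 -> vanishes_outside r f1 -> vanishes_outside r f2 ->
  forall x, Ddir u (Ddir v (Tvl u v f1 f2)) x
            = Ddir v (fdot f1 f2 (perp u)) x - Ddir u (fdot f1 f2 (perp v)) x.
Proof.
  intros hu hv H1 H2 S1 S2 x.
  set (a := fdot f1 f2 (perp u)). set (b := fdot f1 f2 (perp v)).
  assert (Ca : C2 a) by (unfold a; rewrite fdot_lincomb_eq; apply C2_lincomb; auto).
  assert (Cb : C2 b) by (unfold b; rewrite fdot_lincomb_eq; apply C2_lincomb; auto).
  assert (Sa : vanishes_outside r a)
    by (unfold a; rewrite fdot_lincomb_eq; apply vanishes_outside_lincomb; auto).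
  assert (Sb : vanishes_outside r b)
    by (unfold b; rewrite fdot_lincomb_eq; apply vanishes_outside_lincomb; auto).
  assert (ET : Tvl u v f1 f2 = lincomb (-1) (Xray u a) 1 (Xray v b)).
  { extensionality y. unfold Tvl, lincomb. fold a b. ring. }
  assert (EDv : Ddir v (Tvl u v f1 f2) = lincomb (-1) (Xray u (Ddir v a)) (-1) b).
  { extensionality y. rewrite ET, Ddir_lincomb by (apply (has_partials_Xray _ _ r); auto;
      apply Ca || apply Cb).
    unfold lincomb.
    rewrite (Ddir_Xray u a r), (Ddir_Xray v b r), (Xray_Ddir_self v hv r b);
      try apply Ca; try apply Cb; auto.
    ring. }
  rewrite EDv, Ddir_lincomb.
  - unfold lincomb. rewrite (Ddir_Xray u _ r), (Xray_Ddir_self u hu r);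
      auto using C1_Ddir, vanishes_outside_Ddir.
    ring.
  - apply (has_partials_Xray _ _ r); auto using C1_Ddir, vanishes_outside_Ddir.
  - apply C1_has_partials, Cb.
Qed.

Lemma divf_eq_Ddir_Tvl u v r f1 f2 :
  fst u ^ 2 + snd u ^ 2 = 1 -> fst v ^ 2 + snd v ^ 2 = 1 -> det2 v u <> 0 ->
  C2 f1 -> C2 f2 -> vanishes_outside r f1 -> vanishes_outside r f2 ->
  forall x, divf f1 f2 x = - (1 / det2 v u) * Ddir u (Ddir v (Tvl u v f1 f2)) x.
Proof.
  intros hu hv huv H1 H2 S1 S2 x.
  rewrite (Ddir_Tvl u v r), Ddir_perp_sub_divf by (auto; apply C1_has_partials, H1 || apply H2).
  field. exact huv.
Qed.

(** * Compactly supported fields without divergence and curl *)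

Lemma nonneg_derive_zero_ends (F f : R -> R) a b :
  (forall x, is_derive F x (f x)) -> (forall x, a <= x <= b -> 0 <= f x) ->
  F a = 0 -> F b = 0 -> forall x, a < x < b -> f x = 0.
Proof.
  intros D P Fa Fb.
  assert (CF : forall x, continuity_pt F x).
  { intro x. apply (continuity_pt_filterlim F), (ex_derive_continuous F). eexists; apply D. }
  assert (Mono : forall x y, a <= x <= y -> y <= b -> F x <= F y).
  { intros x y Hx Hy.
    destruct (MVT_gen F x y f) as [c [Hc Ec]]; [intros; apply D | intros; apply CF |].
    rewrite Rmin_left, Rmax_right in Hc by lra.
    assert (0 <= f c) by (apply P; lra).
    assert (0 <= f c * (y - x)) by (apply Rmult_le_pos; lra). lra. }
  intros x Hx.
  assert (D0 : is_derive F x 0).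
  { apply is_derive_ext_loc with (f := fun _ => 0).
    - assert (hp : 0 < Rmin (x - a) (b - x)) by (apply Rmin_pos; lra).
      exists (mkposreal _ hp). intros t Ht. change (Rabs (t - x) < Rmin (x - a) (b - x)) in Ht.
      pose proof (Rmin_l (x - a) (b - x)). pose proof (Rmin_r (x - a) (b - x)).
      apply Rabs_lt_between in Ht.
      pose proof (Mono a t ltac:(lra) ltac:(lra)). pose proof (Mono t b ltac:(lra) ltac:(lra)).
      lra.
    - apply is_derive_Reals, derivable_pt_lim_const. }
  rewrite <- (is_derive_unique _ _ _ (D x)). exact (is_derive_unique _ _ _ D0).
Qed.

Section Div_curl_free.

Variables (h1 h2 : pt -> R) (r : R).
Hypotheses (C1h1 : C1 h1) (C1h2 : C1 h2)
  (S1 : vanishes_outside r h1) (S2 : vanishes_outside r h2)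
  (Hdiv : forall x, divf h1 h2 x = 0) (Hcurl : curl_free h1 h2).

Let c := Rabs r + 1.

Lemma vanishes_off_square a b : c <= Rabs a \/ c <= Rabs b -> h1 (a, b) = 0 /\ h2 (a, b) = 0.
Proof. intro H. split; apply (vanishes_outside_box r); auto. Qed.

Lemma vanishes_on_square_sides a b :
  (a = c \/ a = - c \/ b = c \/ b = - c) -> h1 (a, b) = 0 /\ h2 (a, b) = 0.
Proof.
  intro H. apply vanishes_off_square.
  assert (Ac : Rabs c = c) by (apply Rabs_pos_eq; unfold c; pose proof (Rabs_pos r); lra).
  destruct H as [-> | [-> | [-> | ->]]]; rewrite ?Rabs_Ropp, Ac; lra.
Qed.

Definition potential (a b : R) : R := RInt (fun s => h1 (s, b)) (- c) a.

Lemma potential_is_derive1 (a b : R) : is_derive (fun z => potential z b) a (h1 (a, b)).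
Proof.
  apply (is_derive_RInt (fun s => h1 (s, b)) (fun z => potential z b) (- c) a).
  - apply filter_forall. intros. apply (@RInt_correct R_CompleteNormedModule).
    apply ex_RInt_section1, C1_continuous, C1h1.
  - apply continuous_section1, C1_continuous, C1h1.
Qed.

(* Curl-freeness turns the [b]-derivative of the integral of [h1] into the
   integral of [d1 h2], which integrates to [h2]. *)
Lemma potential_is_derive2 (a b : R) : is_derive (fun z => potential a z) b (h2 (a, b)).
Proof.
  unfold potential.
  replace (h2 (a, b)) with (RInt (fun s => Derive (fun z => h1 (s, z)) b) (- c) a).
  - apply (is_derive_RInt_param (fun z s => h1 (s, z)) (- c) a b).
    + apply filter_forall; intros z s _. eexists; apply (C1_is_derive2 h1 C1h1).
    + intros s _.
      apply continuity_2d_pt_ext with (f := fun z s => d2 h1 (s, z)).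
      { intros; symmetry; apply is_derive_unique, (C1_is_derive2 h1 C1h1). }
      apply continuity_2d_pt_swapped, C1_continuous_d2, C1h1.
    + apply filter_forall; intros; apply ex_RInt_section1, C1_continuous, C1h1.
  - rewrite (RInt_ext _ (fun s => d1 h2 (s, b))).
    2: { intros s _. pose proof (Hcurl (s, b)). unfold d2 in *. simpl in *. lra. }
    rewrite (is_RInt_unique _ _ _ _
               (is_RInt_derive (fun s => h2 (s, b)) (fun s => d1 h2 (s, b)) (- c) a
                  (fun s _ => C1_is_derive1 h2 C1h2 s b)
                  (fun s _ => continuous_section1 (d1 h2) b s (C1_continuous_d1 h2 C1h2)))).
    rewrite (proj2 (vanishes_on_square_sides (- c) b ltac:(tauto))).
    unfold minus, plus, opp; simpl. ring.
Qed.

Lemma potential_continuous a b : continuity_2d_pt potential a b.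
Proof.
  apply differentiable_continuity_pt.
  exists (Derive (fun z => potential z b) a), (Derive (fun z => potential a z) b).
  apply differentiable_pt_lim_of_partials.
  - intros; eexists; apply potential_is_derive1.
  - intros; eexists; apply potential_is_derive2.
  - apply continuity_2d_pt_ext with (f := fun u v => h1 (u, v)).
    { intros; symmetry; apply is_derive_unique, potential_is_derive1. }
    apply continuity_2d_pt_of_continuous, C1_continuous, C1h1.
  - apply continuity_2d_pt_ext with (f := fun u v => h2 (u, v)).
    { intros; symmetry; apply is_derive_unique, potential_is_derive2. }
    apply continuity_2d_pt_of_continuous, C1_continuous, C1h2.
Qed.

Lemma potential_continuous1 (b a : R) : continuous (fun z => potential z b) a.
Proof.
  apply (ex_derive_continuous (fun z => potential z b)). eexists; apply potential_is_derive1.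
Qed.

Definition flux (b : R) : R := RInt (fun a => h2 (a, b) * potential a b) (- c) c.

Definition energy_density (b a : R) : R := h1 (a, b) * h1 (a, b) + h2 (a, b) * h2 (a, b).

Definition energy (b : R) : R := RInt (energy_density b) (- c) c.

Lemma energy_density_continuous b a : continuous (energy_density b) a.
Proof.
  unfold energy_density.
  apply (continuous_plus (fun a => h1 (a, b) * h1 (a, b)) (fun a => h2 (a, b) * h2 (a, b))).
  - apply (continuous_mult (fun a => h1 (a, b)) (fun a => h1 (a, b)));
      apply continuous_section1, C1_continuous, C1h1.
  - apply (continuous_mult (fun a => h2 (a, b)) (fun a => h2 (a, b)));
      apply continuous_section1, C1_continuous, C1h2.
Qed.

Lemma ex_RInt_energy_density b x y : ex_RInt (energy_density b) x y.
Proof.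
  apply (@ex_RInt_continuous R_CompleteNormedModule). intros; apply energy_density_continuous.
Qed.

(* The integrand is the [a]-derivative of [h1 (a, b) * potential a b], which vanishes
   at [a = - c] and [a = c]. *)
Lemma is_RInt_d1_h1_potential (b : R) :
  is_RInt (fun a => d1 h1 (a, b) * potential a b + h1 (a, b) * h1 (a, b)) (- c) c 0.
Proof.
  assert (Cont : forall a,
             continuous (fun a => d1 h1 (a, b) * potential a b + h1 (a, b) * h1 (a, b)) a).
  { intro a.
    apply (continuous_plus (fun a => d1 h1 (a, b) * potential a b)
                           (fun a => h1 (a, b) * h1 (a, b))).
    - apply (continuous_mult (fun a => d1 h1 (a, b)) (fun a => potential a b));
        [apply continuous_section1, C1_continuous_d1, C1h1 | apply potential_continuous1].
    - apply (continuous_mult (fun a => h1 (a, b)) (fun a => h1 (a, b)));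
        apply continuous_section1, C1_continuous, C1h1. }
  pose proof (is_RInt_derive (fun a => h1 (a, b) * potential a b)
                (fun a => d1 h1 (a, b) * potential a b + h1 (a, b) * h1 (a, b)) (- c) c
                (fun a _ => Derive.is_derive_mult _ _ a _ _
                              (C1_is_derive1 h1 C1h1 a b) (potential_is_derive1 a b))
                (fun a _ => Cont a)) as I.
  cbv beta in I.
  rewrite (proj1 (vanishes_on_square_sides c b ltac:(tauto))),
          (proj1 (vanishes_on_square_sides (- c) b ltac:(tauto))) in I.
  replace 0 with (minus (0 * potential c b) (0 * potential (- c) b))
    by (unfold minus, plus, opp; simpl; ring).
  exact I.
Qed.

(* Differentiate under the integral, use [d2 h2 = - d1 h1] and subtract
   [is_RInt_d1_h1_potential]. *)
Lemma flux_is_derive (b : R) : is_derive flux b (energy b).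
Proof.
  assert (DE : forall a z, is_derive (fun z => h2 (a, z) * potential a z) z
                             (d2 h2 (a, z) * potential a z + h2 (a, z) * h2 (a, z))).
  { intros a z. apply Derive.is_derive_mult;
      [apply (C1_is_derive2 h2 C1h2) | apply potential_is_derive2]. }
  replace (energy b)
    with (RInt (fun a => Derive (fun z => h2 (a, z) * potential a z) b) (- c) c).
  - apply (is_derive_RInt_param (fun z a => h2 (a, z) * potential a z) (- c) c b).
    + apply filter_forall; intros z a _. eexists; apply DE.
    + intros a _.
      apply continuity_2d_pt_ext
        with (f := fun z a => d2 h2 (a, z) * potential a z + h2 (a, z) * h2 (a, z)).
      { intros; symmetry; apply is_derive_unique, DE. }
      apply continuity_2d_pt_plus; apply continuity_2d_pt_mult;
        try apply continuity_2d_pt_swapped;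
        auto using C1_continuous, C1_continuous_d2.
      apply (continuity_2d_pt_swap potential), potential_continuous.
    + apply filter_forall; intro z. apply (@ex_RInt_continuous R_CompleteNormedModule).
      intros a _. apply (continuous_mult (fun a => h2 (a, z)) (fun a => potential a z));
        [apply continuous_section1, C1_continuous, C1h2 | apply potential_continuous1].
  - apply is_RInt_unique.
    pose proof (is_RInt_minus _ _ _ _ _ _
                  (RInt_correct _ _ _ (ex_RInt_energy_density b (- c) c))
                  (is_RInt_d1_h1_potential b)) as I.
    replace (energy b) with (minus (RInt (energy_density b) (- c) c) 0)
      by (unfold minus, plus, opp, energy; simpl; ring).
    eapply is_RInt_ext; [| exact I].
    intros a _. symmetry. etransitivity; [apply is_derive_unique, DE |].
    pose proof (Hdiv (a, b)) as D. unfold divf in D.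
    unfold energy_density, minus, plus, opp; simpl.
    replace (d2 h2 (a, b)) with (- d1 h1 (a, b)) by lra. ring.
Qed.

Lemma flux_square_sides (b : R) : b = c \/ b = - c -> flux b = 0.
Proof.
  intro Hb. unfold flux. rewrite (RInt_ext _ (fun _ => 0)).
  - rewrite RInt_const. apply Rmult_0_r.
  - intros a _. rewrite (proj2 (vanishes_on_square_sides a b ltac:(tauto))). apply Rmult_0_l.
Qed.

Lemma energy_zero (b : R) : - c < b < c -> energy b = 0.
Proof.
  apply (nonneg_derive_zero_ends flux energy (- c) c flux_is_derive);
    [| apply flux_square_sides; tauto ..].
  intros b' _. apply RInt_ge_0.
  - unfold c; pose proof (Rabs_pos r); lra.
  - apply ex_RInt_energy_density.
  - intros a _. unfold energy_density. nra.
Qed.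

Lemma div_curl_free_vanishes x : h1 x = 0 /\ h2 x = 0.
Proof.
  destruct x as [a b].
  destruct (Rlt_dec (Rabs a) c) as [Ha | Ha]; [destruct (Rlt_dec (Rabs b) c) as [Hb | Hb] |];
    [| apply vanishes_off_square; lra ..].
  apply Rabs_lt_between in Ha. apply Rabs_lt_between in Hb.
  assert (Z : energy_density b a = 0).
  { apply (nonneg_derive_zero_ends (fun s => RInt (energy_density b) (- c) s)
                                   (energy_density b) (- c) c); [| | | apply energy_zero | ]; auto.
    - intro s. apply (is_derive_RInt _ _ (- c)); [| apply energy_density_continuous].
      apply filter_forall. intros. apply (@RInt_correct R_CompleteNormedModule).
      apply ex_RInt_energy_density.
    - intros s _. unfold energy_density. nra.
    - exact (RInt_point (V := R_CompleteNormedModule) _ _). }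
  unfold energy_density in Z. split; nra.
Qed.

End Div_curl_free.

Lemma divf_lincomb a b f1 f2 g1 g2 x :
  C1 f1 -> C1 f2 -> C1 g1 -> C1 g2 ->
  divf (lincomb a f1 b g1) (lincomb a f2 b g2) x = a * divf f1 f2 x + b * divf g1 g2 x.
Proof.
  intros. unfold divf. rewrite d1_lincomb, d2_lincomb by (apply C1_has_partials; auto).
  unfold lincomb. ring.
Qed.

Lemma curl_free_lincomb a b f1 f2 g1 g2 :
  C1 f1 -> C1 f2 -> C1 g1 -> C1 g2 -> curl_free f1 f2 -> curl_free g1 g2 ->
  curl_free (lincomb a f1 b g1) (lincomb a f2 b g2).
Proof.
  intros H1 H2 H3 H4 Cf Cg x. rewrite d1_lincomb, d2_lincomb by (apply C1_has_partials; auto).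
  pose proof (Cf x). pose proof (Cg x). unfold lincomb. nra.
Qed.

Theorem theorem4 (u v : pt) (rho : R)
  (hu : fst u ^ 2 + snd u ^ 2 = 1) (hv : fst v ^ 2 + snd v ^ 2 = 1)
  (huv : det2 v u <> 0) (hrho : 0 < rho) :
  (forall f1 f2 : pt -> R,
     C2c_disc rho f1 -> C2c_disc rho f2 ->
     forall x : pt,
       divf f1 f2 x = - (1 / det2 v u) * Ddir u (Ddir v (Tvl u v f1 f2)) x)
  /\
  (forall f1 f2 g1 g2 : pt -> R,
     C2c_disc rho f1 -> C2c_disc rho f2 -> curl_free f1 f2 ->
     C2c_disc rho g1 -> C2c_disc rho g2 -> curl_free g1 g2 ->
     (forall x : pt, Tvl u v f1 f2 x = Tvl u v g1 g2 x) ->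
     forall x : pt, f1 x = g1 x /\ f2 x = g2 x).
Proof.
  assert (inv : forall f1 f2, C2c_disc rho f1 -> C2c_disc rho f2 -> forall x,
             divf f1 f2 x = - (1 / det2 v u) * Ddir u (Ddir v (Tvl u v f1 f2)) x).
  { intros f1 f2 H1 H2.
    apply (divf_eq_Ddir_Tvl u v rho); auto using C2c_disc_vanishes_outside;
      [apply H1 | apply H2]. }
  split; [exact inv |].
  intros f1 f2 g1 g2 Hf1 Hf2 Cf Hg1 Hg2 Cg HT x.
  assert (C1f1 : C1 f1) by apply Hf1. assert (C1f2 : C1 f2) by apply Hf2.
  assert (C1g1 : C1 g1) by apply Hg1. assert (C1g2 : C1 g2) by apply Hg2.
  assert (Div : forall y, divf (lincomb 1 f1 (-1) g1) (lincomb 1 f2 (-1) g2) y = 0).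
  { intro y. rewrite divf_lincomb, (inv f1 f2 Hf1 Hf2 y), (inv g1 g2 Hg1 Hg2 y) by assumption.
    replace (Tvl u v f1 f2) with (Tvl u v g1 g2) by (extensionality z; symmetry; apply HT).
    ring. }
  destruct (div_curl_free_vanishes (lincomb 1 f1 (-1) g1) (lincomb 1 f2 (-1) g2) rho
              (C1_lincomb _ _ _ _ C1f1 C1g1) (C1_lincomb _ _ _ _ C1f2 C1g2)
              (vanishes_outside_lincomb _ _ _ _ _ (C2c_disc_vanishes_outside _ _ Hf1)
                                                  (C2c_disc_vanishes_outside _ _ Hg1))
              (vanishes_outside_lincomb _ _ _ _ _ (C2c_disc_vanishes_outside _ _ Hf2)
                                                  (C2c_disc_vanishes_outside _ _ Hg2))
              Div (curl_free_lincomb _ _ _ _ _ _ C1f1 C1f2 C1g1 C1g2 Cf Cg) x) as [Z1 Z2].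
  unfold lincomb in Z1, Z2. split; lra.
Qed.
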